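(* Let $T:[0,1]\to[0,1]$ be the tent map, $T(x)=2x$ for $x<1/2$ and $T(x)=2(1-x)$ for $x\ge1/2$, and let $\Lambda=\{\tau\in[0,1]: T^m(\tau)\le\tau\ \text{for all } m\ge0\}$. Let $K_1=\overline{1}$ and, for $j\ge1$, let $K_{j+1}$ be the periodic sequence whose repeating block is obtained by writing the repeating block of $K_j$ twice and replacing the last symbol by its complement. For $s=s_1s_2\dots\in\{0,1\}^{\mathbb N}$ let $\tau(s)=\sum_{k\ge1}t_k2^{-k}$ with $t_k=\sum_{i=1}^k s_i\pmod 2$, and put $\tau_j=\tau(K_j)$. Then $\tau_j\in\Lambda$ for all $j\ge1$ and $\tau_1<\tau_2<\tau_3<\cdots$. *)

From Stdlib Require Import Reals Lra List.
From Coquelicot Require Import Coquelicot.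
Open Scope R_scope.

Definition tent (x : R) : R :=
  if Rlt_dec x (1/2) then 2 * x else 2 * (1 - x).

Definition inLambda (tau : R) : Prop :=
  0 <= tau <= 1 /\ forall m : nat, Nat.iter m tent tau <= tau.

(* Repeating block of K_{j+1} (so blk 0 is the block of K_1 = overline{1}).
   blk (j+1) = blk j ++ blk j with its last symbol complemented. *)
Fixpoint blk (j : nat) : list bool :=
  match j with
  | O => true :: nil
  | S j' => let d := blk j' ++ blk j' in
            removelast d ++ (negb (last d false) :: nil)
  end.

(* Sequences s = s_1 s_2 ... are encoded 0-indexed: s k = s_{k+1}. *)
Definition K (j : nat) : nat -> bool :=
  fun k => let b := blk (j - 1) in nth (k mod length b) b false.

Fixpoint tpar (s : nat -> bool) (k : nat) : bool :=
  match k with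
  | O => false
  | S k' => xorb (tpar s k') (s k')
  end.

Definition b2R (b : bool) : R := if b then 1 else 0.

Definition tau_of (s : nat -> bool) : R :=
  Series (fun n : nat => b2R (tpar s (S n)) / 2 ^ (S n)).

Definition tau_j (j : nat) : R := tau_of (K j).

(* The parity sequence t of K_j is the 2^j-periodic repetition of the first 2^j
   Thue-Morse symbols, because the block of K_j is a prefix of the
   period-doubling sequence, the first differences of Thue-Morse.  The tent map
   acts on tau(s) as the shift of s, so T^m(tau_j) is the binary value of
   k |-> t_(m+k) + t_m (mod 2).  That this normalised rotation of t is
   lexicographically below t follows by induction on j: the Thue-Morse
   substitution 0 -> 01, 1 -> 10 preserves the lexicographic order, and odd
   rotations are already smaller within the first three symbols.  Finally the
   sequences t of K_j and K_(j+1) first differ at position 2^j, with 0 < 1. *)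

From Stdlib Require Import Reals Lra Lia NArith List.
From Coquelicot Require Import Coquelicot.
Import ListNotations.
Local Open Scope nat_scope.

Fixpoint thue_morse_pos (p : positive) : bool :=
  match p with
  | xH => true
  | xO q => thue_morse_pos q
  | xI q => negb (thue_morse_pos q)
  end.

Definition thue_morse (n : nat) : bool :=
  match N.of_nat n with N0 => false | Npos p => thue_morse_pos p end.

Lemma thue_morse_double x : thue_morse (2 * x) = thue_morse x.
Proof. unfold thue_morse. rewrite Nat2N.inj_double. now destruct (N.of_nat x). Qed.

Lemma thue_morse_succ_double x : thue_morse (2 * x + 1) = negb (thue_morse x).
Proof.
  unfold thue_morse. rewrite Nat.add_1_r, Nat2N.inj_succ_double.
  now destruct (N.of_nat x).
Qed.

Lemma pow2_pos n : 0 < 2 ^ n.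
Proof. apply Nat.neq_0_lt_0, Nat.pow_nonzero. discriminate. Qed.

Lemma thue_morse_pow2 n : thue_morse (2 ^ n) = true.
Proof.
  induction n as [|n IH]; [reflexivity|].
  now rewrite Nat.pow_succ_r', thue_morse_double.
Qed.

Lemma thue_morse_pow2_add n x : x < 2 ^ n -> thue_morse (2 ^ n + x) = negb (thue_morse x).
Proof.
  revert x; induction n as [|n IH]; intros x Hx.
  - simpl in Hx. now replace x with 0 by lia.
  - rewrite Nat.pow_succ_r' in *.
    destruct (Nat.Even_or_Odd x) as [[y ->]|[y ->]].
    + replace (2 * 2 ^ n + 2 * y) with (2 * (2 ^ n + y)) by lia.
      rewrite !thue_morse_double. apply IH. lia.
    + replace (2 * 2 ^ n + (2 * y + 1)) with (2 * (2 ^ n + y) + 1) by lia.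
      rewrite !thue_morse_succ_double, IH by lia. reflexivity.
Qed.

Definition period_doubling (i : nat) : bool :=
  xorb (thue_morse i) (thue_morse (S i)).

Lemma period_doubling_pow2_add n r :
  S r < 2 ^ n -> period_doubling (2 ^ n + r) = period_doubling r.
Proof.
  intro Hr. unfold period_doubling. rewrite <- Nat.add_succ_r.
  rewrite !thue_morse_pow2_add by lia. now destruct (thue_morse r), (thue_morse (S r)).
Qed.

Lemma period_doubling_last n :
  period_doubling (2 ^ n + (2 ^ n - 1)) = negb (period_doubling (2 ^ n - 1)).
Proof.
  pose proof (pow2_pos n).
  unfold period_doubling. rewrite thue_morse_pow2_add by lia.
  replace (S (2 ^ n + (2 ^ n - 1))) with (2 ^ S n) by (simpl; lia).
  replace (S (2 ^ n - 1)) with (2 ^ n) by lia.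
  rewrite !thue_morse_pow2. now destruct (thue_morse (2 ^ n - 1)).
Qed.

Lemma blk_snoc n : exists b x, blk n = b ++ [x].
Proof. destruct n; [exists [], true | do 2 eexists]; reflexivity. Qed.

Lemma blk_succ n b x : blk n = b ++ [x] -> blk (S n) = (b ++ [x]) ++ (b ++ [negb x]).
Proof.
  intro Hb. simpl blk. rewrite Hb, app_assoc, removelast_last, last_last.
  now rewrite <- !app_assoc.
Qed.

Lemma blk_length n : length (blk n) = 2 ^ n.
Proof.
  induction n as [|n IH]; [reflexivity|].
  destruct (blk_snoc n) as (b & x & Hb).
  rewrite (blk_succ n b x Hb), Nat.pow_succ_r', <- IH, Hb, !length_app.
  simpl. lia.
Qed.

Lemma nth_blk n i : i < 2 ^ n -> nth i (blk n) false = period_doubling i.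
Proof.
  revert i; induction n as [|n IH]; intros i Hi.
  - simpl in Hi. now replace i with 0 by lia.
  - destruct (blk_snoc n) as (b & x & Hb).
    pose proof (blk_length n) as Hlen. rewrite Hb, length_app in Hlen. simpl in Hlen.
    rewrite (blk_succ n b x Hb). rewrite Nat.pow_succ_r' in Hi.
    assert (Hx : x = period_doubling (length b)).
    { rewrite <- IH, Hb, nth_middle by lia. reflexivity. }
    destruct (Nat.lt_ge_cases i (2 ^ n)) as [Hlo|Hhi].
    { rewrite app_nth1, <- Hb by (rewrite length_app; simpl; lia). now apply IH. }
    rewrite app_nth2, length_app by (rewrite length_app; simpl; lia). simpl length.
    destruct (Nat.lt_ge_cases (i - (length b + 1)) (length b)) as [Hmid|Hend].
    + rewrite app_nth1, <- (app_nth1 b [x]), <- Hb, IH by lia.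
      replace i with (2 ^ n + (i - (length b + 1))) at 2 by lia.
      now rewrite period_doubling_pow2_add by lia.
    + replace (i - (length b + 1)) with (length b) by lia.
      replace i with (2 ^ n + (2 ^ n - 1)) by lia.
      rewrite nth_middle, period_doubling_last, Hx. do 2 f_equal. lia.
Qed.

Definition tm_periodic (j x : nat) : bool := thue_morse (x mod 2 ^ j).

Lemma tm_periodic_0 j : tm_periodic j 0 = false.
Proof. unfold tm_periodic. now rewrite Nat.Div0.mod_0_l. Qed.

Lemma tm_periodic_small j x : x < 2 ^ j -> tm_periodic j x = thue_morse x.
Proof. intro Hx. unfold tm_periodic. now rewrite Nat.mod_small. Qed.

Lemma tm_periodic_add_half n k :
  tm_periodic (S n) (k + 2 ^ n) = negb (tm_periodic (S n) k).
Proof.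
  unfold tm_periodic. rewrite <- Nat.Div0.add_mod_idemp_l, Nat.pow_succ_r'.
  pose proof (pow2_pos n).
  pose proof (Nat.mod_upper_bound k (2 * 2 ^ n) ltac:(lia)).
  set (r := k mod (2 * 2 ^ n)) in *.
  destruct (Nat.lt_ge_cases r (2 ^ n)) as [Hlo|Hhi].
  - rewrite Nat.mod_small, Nat.add_comm by lia. now apply thue_morse_pow2_add.
  - replace (r + 2 ^ n) with ((r - 2 ^ n) + 1 * (2 * 2 ^ n)) by lia.
    replace r with (2 ^ n + (r - 2 ^ n)) at 2 by lia.
    rewrite Nat.Div0.mod_add, Nat.mod_small, thue_morse_pow2_add by lia.
    now rewrite Bool.negb_involutive.
Qed.

Lemma tm_periodic_multiple j q : tm_periodic j (q * 2 ^ j) = false.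
Proof. unfold tm_periodic. now rewrite Nat.Div0.mod_mul. Qed.

Lemma periodic_mod {A : Type} (g : nat -> A) p :
  (forall k, g (k + p) = g k) -> forall k, g k = g (k mod p).
Proof.
  intros Hg k. rewrite (Nat.div_mod_eq k p) at 1.
  induction (k / p) as [|q IH]; [now rewrite Nat.mul_0_r|].
  replace (p * S q + k mod p) with (p * q + k mod p + p) by lia. now rewrite Hg.
Qed.

Lemma tpar_telescope s f :
  f 0 = false -> (forall k, s k = xorb (f k) (f (S k))) -> forall k, tpar s k = f k.
Proof.
  intros H0 Hs k. induction k as [|k IH]; [easy|].
  simpl. rewrite IH, Hs. now destruct (f k), (f (S k)).
Qed.

Lemma K_succ n k : K (S n) k = period_doubling (k mod 2 ^ n).
Proof.
  unfold K. rewrite Nat.sub_1_r, Nat.pred_succ, blk_length.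
  apply nth_blk, Nat.mod_upper_bound, Nat.pow_nonzero. discriminate.
Qed.

(* K_{n+1} has period 2^n but its block has odd sum, so its parity sequence is
   2^n-antiperiodic. *)
Lemma tpar_K n k : tpar (K (S n)) k = tm_periodic (S n) k.
Proof.
  apply tpar_telescope; [apply tm_periodic_0|]. clear k. intro k.
  set (g k := xorb (tm_periodic (S n) k) (tm_periodic (S n) (S k))).
  assert (Hg : forall k, g (k + 2 ^ n) = g k).
  { intro k'. unfold g. rewrite <- Nat.add_succ_l, !tm_periodic_add_half.
    now destruct (tm_periodic _ k'), (tm_periodic _ (S k')). }
  change (K (S n) k = g k). rewrite (periodic_mod g _ Hg), K_succ.
  pose proof (Nat.mod_upper_bound k (2 ^ n) (Nat.pow_nonzero 2 n ltac:(discriminate))).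
  unfold g. rewrite !tm_periodic_small by (rewrite Nat.pow_succ_r'; lia).
  reflexivity.
Qed.

Lemma tm_periodic_double j y : tm_periodic (S j) (2 * y) = tm_periodic j y.
Proof.
  unfold tm_periodic. now rewrite Nat.pow_succ_r', Nat.Div0.mul_mod_distr_l, thue_morse_double.
Qed.

Lemma tm_periodic_succ_double j y : tm_periodic (S j) (2 * y + 1) = negb (tm_periodic j y).
Proof.
  unfold tm_periodic. rewrite Nat.pow_succ_r'.
  pose proof (pow2_pos j).
  replace ((2 * y + 1) mod (2 * 2 ^ j)) with (2 * (y mod 2 ^ j) + 1).
  - apply thue_morse_succ_double.
  - apply (Nat.mod_unique _ _ (y / 2 ^ j)).
    + pose proof (Nat.mod_upper_bound y (2 ^ j) ltac:(lia)). lia.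
    + pose proof (Nat.div_mod_eq y (2 ^ j)). lia.
Qed.

Lemma tm_periodic_1 x : tm_periodic 1 x = Nat.odd x.
Proof.
  destruct (Nat.Even_or_Odd x) as [[y ->]|[y ->]].
  - rewrite tm_periodic_double, Nat.odd_mul. unfold tm_periodic. now rewrite Nat.mod_1_r.
  - rewrite tm_periodic_succ_double, Nat.odd_add, Nat.odd_mul.
    unfold tm_periodic. now rewrite Nat.mod_1_r.
Qed.

Definition tm_shift (j a k : nat) : bool :=
  xorb (tm_periodic j (a + k)) (tm_periodic j a).

Lemma tm_shift_0_r j a : tm_shift j a 0 = false.
Proof. unfold tm_shift. now rewrite Nat.add_0_r, Bool.xorb_nilpotent. Qed.

Lemma tm_shift_1 a k : tm_shift 1 a k = tm_periodic 1 k.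
Proof.
  unfold tm_shift. rewrite !tm_periodic_1, Nat.odd_add.
  now destruct (Nat.odd a), (Nat.odd k).
Qed.

Lemma tm_shift_succ_double_1 j b : tm_shift (S j) (2 * b + 1) 1 = negb (tm_shift j b 1).
Proof.
  unfold tm_shift. replace (2 * b + 1 + 1) with (2 * (b + 1)) by lia.
  rewrite tm_periodic_double, tm_periodic_succ_double.
  now destruct (tm_periodic j (b + 1)), (tm_periodic j b).
Qed.

Lemma tm_shift_succ_double_2 j b : tm_shift (S j) (2 * b + 1) 2 = tm_shift j b 1.
Proof.
  unfold tm_shift. replace (2 * b + 1 + 2) with (2 * (b + 1) + 1) by lia.
  rewrite !tm_periodic_succ_double.
  now destruct (tm_periodic j (b + 1)), (tm_periodic j b).
Qed.

Definition tm_subst (d d' : nat -> bool) : Prop :=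
  forall x, d' (2 * x) = d x /\ d' (2 * x + 1) = negb (d x).

Lemma tm_subst_tm_periodic j : tm_subst (tm_periodic j) (tm_periodic (S j)).
Proof. split; [apply tm_periodic_double | apply tm_periodic_succ_double]. Qed.

Lemma tm_subst_tm_shift j b : tm_subst (tm_shift j b) (tm_shift (S j) (2 * b)).
Proof.
  intro x. unfold tm_shift. split.
  - now rewrite <- Nat.mul_add_distr_l, !tm_periodic_double.
  - rewrite Nat.add_assoc, <- Nat.mul_add_distr_l.
    rewrite tm_periodic_succ_double, tm_periodic_double.
    now destruct (tm_periodic j (b + x)), (tm_periodic j b).
Qed.

Definition lex_lt_at (i : nat) (d e : nat -> bool) : Prop :=
  (forall k, k < i -> d k = e k) /\ d i = false /\ e i = true.

Definition lex_le (d e : nat -> bool) : Prop :=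
  (forall k, d k = e k) \/ exists i, lex_lt_at i d e.

Lemma lex_le_tm_subst d e d' e' :
  tm_subst d d' -> tm_subst e e' -> lex_le d e -> lex_le d' e'.
Proof.
  intros Hd He [Heq|(i & Hlt & Hdi & Hei)].
  - left. intro k. destruct (Nat.Even_or_Odd k) as [[x ->]|[x ->]].
    + now rewrite (proj1 (Hd x)), (proj1 (He x)).
    + now rewrite (proj2 (Hd x)), (proj2 (He x)), Heq.
  - right. exists (2 * i). repeat split.
    + intros k Hk. destruct (Nat.Even_or_Odd k) as [[x ->]|[x ->]].
      * rewrite (proj1 (Hd x)), (proj1 (He x)). apply Hlt. lia.
      * rewrite (proj2 (Hd x)), (proj2 (He x)), Hlt by lia. reflexivity.
    + now rewrite (proj1 (Hd i)).
    + now rewrite (proj1 (He i)).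
Qed.

Lemma lex_le_tail d e : d 0 = e 0 -> lex_le d e -> lex_le (fun n => d (S n)) (fun n => e (S n)).
Proof.
  intros H0 [Heq|(i & Hlt & Hdi & Hei)]; [now left|].
  right. destruct i as [|i]; [congruence|].
  exists i. repeat split; auto. intros k Hk. apply Hlt. lia.
Qed.

Lemma tm_shift_lex_le j a : lex_le (tm_shift (S j) a) (tm_periodic (S j)).
Proof.
  revert a; induction j as [|j IH]; intro a.
  { left. apply tm_shift_1. }
  destruct (Nat.Even_or_Odd a) as [[b ->]|[b ->]].
  { apply (lex_le_tm_subst (tm_shift (S j) b) (tm_periodic (S j)));
      [apply tm_subst_tm_shift | apply tm_subst_tm_periodic | apply IH]. }
  assert (Hsmall : forall x, x <= 2 -> tm_periodic (S (S j)) x = thue_morse x).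
  { intros x Hx. apply tm_periodic_small. rewrite !Nat.pow_succ_r'. pose proof (pow2_pos j). lia. }
  right. destruct (tm_shift (S j) b 1) eqn:Hb.
  - exists 1. repeat split.
    + intros k Hk. replace k with 0 by lia. now rewrite tm_shift_0_r, tm_periodic_0.
    + now rewrite tm_shift_succ_double_1, Hb.
    + rewrite Hsmall by lia. reflexivity.
  - exists 2. repeat split.
    + intros k Hk. destruct k as [|[|k]]; [| |lia].
      * now rewrite tm_shift_0_r, tm_periodic_0.
      * rewrite tm_shift_succ_double_1, Hb, Hsmall by lia. reflexivity.
    + now rewrite tm_shift_succ_double_2.
    + rewrite Hsmall by lia. reflexivity.
Qed.

Lemma tm_periodic_lex_lt_at j :
  lex_lt_at (2 ^ j - 1) (fun i => tm_periodic j (S i)) (fun i => tm_periodic (S j) (S i)).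
Proof.
  pose proof (pow2_pos j). pose proof (Nat.pow_succ_r' 2 j).
  repeat split; simpl.
  - intros k Hk. rewrite !tm_periodic_small by lia. reflexivity.
  - replace (S (2 ^ j - 1)) with (1 * 2 ^ j) by lia. apply tm_periodic_multiple.
  - rewrite tm_periodic_small by lia. replace (S (2 ^ j - 1)) with (2 ^ j) by lia.
    apply thue_morse_pow2.
Qed.

Local Open Scope R_scope.

Definition bin_val (d : nat -> bool) : R := Series (fun n => b2R (d n) / 2 ^ S n).

Lemma inv_pow2_succ n : / 2 ^ S n = / 2 * (/ 2) ^ n.
Proof. rewrite <- pow_inv. reflexivity. Qed.

Lemma ex_series_inv_pow2 : ex_series (fun n => / 2 ^ S n).
Proof.
  apply (ex_series_ext (fun n => scal (/ 2) ((/ 2) ^ n))).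
  - intro n. now rewrite inv_pow2_succ.
  - apply (@ex_series_scal_l R_AbsRing R_NormedModule), ex_series_geom.
    rewrite Rabs_pos_eq; lra.
Qed.

Lemma Series_inv_pow2 : Series (fun n => / 2 ^ S n) = 1.
Proof.
  rewrite (Series_ext _ (fun n => / 2 * (/ 2) ^ n)) by apply inv_pow2_succ.
  rewrite Series_scal_l, Series_geom by (rewrite Rabs_pos_eq; lra). field.
Qed.

Lemma bin_term_bounds (b : bool) n : 0 <= b2R b / 2 ^ S n <= / 2 ^ S n.
Proof.
  assert (0 < / 2 ^ S n) by (apply Rinv_0_lt_compat, pow_lt; lra).
  destruct b; unfold b2R, Rdiv; lra.
Qed.

Lemma ex_series_bin_val d : ex_series (fun n => b2R (d n) / 2 ^ S n).
Proof.
  apply (@ex_series_le R_AbsRing R_CompleteNormedModule _ (fun n => / 2 ^ S n));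
    [|exact ex_series_inv_pow2].
  intro n. change (Rabs (b2R (d n) / 2 ^ S n) <= / 2 ^ S n).
  destruct (bin_term_bounds (d n) n). rewrite Rabs_pos_eq; lra.
Qed.

Lemma bin_val_bounds d : 0 <= bin_val d <= 1.
Proof.
  split.
  - rewrite <- (Rmult_0_l 1), <- Series_inv_pow2, <- Series_scal_l.
    apply Series_le; [|apply ex_series_bin_val].
    intro n. rewrite Rmult_0_l. pose proof (bin_term_bounds (d n) n). lra.
  - rewrite <- Series_inv_pow2.
    apply Series_le; [intro n; apply bin_term_bounds | apply ex_series_inv_pow2].
Qed.

Lemma bin_val_ext d e : (forall n, d n = e n) -> bin_val d = bin_val e.
Proof. intro H. apply Series_ext. intro n. now rewrite H. Qed.

Lemma bin_val_cons d : bin_val d = (b2R (d 0%nat) + bin_val (fun n => d (S n))) / 2.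
Proof.
  unfold bin_val. rewrite Series_incr_1 by apply ex_series_bin_val.
  rewrite (Series_ext _ (fun n => / 2 * (b2R (d (S n)) / 2 ^ S n))).
  - rewrite Series_scal_l. simpl. field.
  - intro n. change (2 ^ S (S n)) with (2 * 2 ^ S n). field. apply pow_nonzero. lra.
Qed.

Lemma bin_val_negb d : bin_val (fun n => negb (d n)) = 1 - bin_val d.
Proof.
  unfold bin_val. rewrite <- Series_inv_pow2, <- Series_minus
    by (apply ex_series_inv_pow2 || apply ex_series_bin_val).
  apply Series_ext. intro n. destruct (d n); simpl; field; apply pow_nonzero; lra.
Qed.

Lemma bin_val_lt_1 d k : d k = false -> bin_val d < 1.
Proof.
  revert d; induction k as [|k IH]; intros d Hk; rewrite bin_val_cons.
  - rewrite Hk. pose proof (bin_val_bounds (fun n => d (S n))). simpl. lra.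
  - specialize (IH (fun n => d (S n)) Hk). destruct (d 0%nat); simpl; lra.
Qed.

Lemma bin_val_le_of_lex_lt_at i d e : lex_lt_at i d e -> bin_val d <= bin_val e.
Proof.
  revert d e; induction i as [|i IH]; intros d e (Hlt & Hdi & Hei);
    rewrite (bin_val_cons d), (bin_val_cons e).
  - pose proof (bin_val_bounds (fun n => d (S n))). pose proof (bin_val_bounds (fun n => e (S n))).
    rewrite Hdi, Hei. simpl. lra.
  - assert (bin_val (fun n => d (S n)) <= bin_val (fun n => e (S n))).
    { apply IH. repeat split; auto. intros k Hk. apply Hlt. lia. }
    rewrite (Hlt 0%nat) by lia. lra.
Qed.

Lemma bin_val_lt_of_lex_lt_at i k d e :
  lex_lt_at i d e -> (i < k)%nat -> d k = false -> bin_val d < bin_val e.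
Proof.
  revert k d e; induction i as [|i IH]; intros [|k] d e (Hlt & Hdi & Hei) Hik Hk; try lia;
    rewrite (bin_val_cons d), (bin_val_cons e).
  - pose proof (bin_val_lt_1 (fun n => d (S n)) k Hk).
    pose proof (bin_val_bounds (fun n => e (S n))).
    rewrite Hdi, Hei. simpl. lra.
  - assert (bin_val (fun n => d (S n)) < bin_val (fun n => e (S n))).
    { apply (IH k); auto; [|lia]. repeat split; auto. intros k' Hk'. apply Hlt. lia. }
    rewrite (Hlt 0%nat) by lia. lra.
Qed.

Lemma bin_val_le_of_lex_le d e : lex_le d e -> bin_val d <= bin_val e.
Proof.
  intros [Heq|(i & Hi)].
  - right. now apply bin_val_ext.
  - now apply (bin_val_le_of_lex_lt_at i).
Qed.

Lemma bin_val_tm_periodic_lt j :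
  bin_val (fun i => tm_periodic j (S i)) < bin_val (fun i => tm_periodic (S j) (S i)).
Proof.
  pose proof (pow2_pos j). pose proof (Nat.pow_succ_r' 2 j).
  apply (bin_val_lt_of_lex_lt_at (2 ^ j - 1) (2 ^ S j - 1)); [apply tm_periodic_lex_lt_at|lia|].
  replace (S (2 ^ S j - 1)) with (2 * 2 ^ j)%nat by lia. apply tm_periodic_multiple.
Qed.

Lemma bin_val_tm_shift_le j a :
  bin_val (fun i => tm_shift (S j) a (S i)) <= bin_val (fun i => tm_periodic (S j) (S i)).
Proof.
  apply bin_val_le_of_lex_le, lex_le_tail, tm_shift_lex_le.
  now rewrite tm_shift_0_r, tm_periodic_0.
Qed.

Lemma tpar_succ_l s k : tpar s (S k) = xorb (s 0%nat) (tpar (fun n => s (S n)) k).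
Proof.
  induction k as [|k IH]; simpl in *.
  - now destruct (s 0%nat).
  - now rewrite IH, Bool.xorb_assoc.
Qed.

Lemma tent_tau_of s : tent (tau_of s) = tau_of (fun n => s (S n)).
Proof.
  change (tent (bin_val (fun n => tpar s (S n)))
          = bin_val (fun n => tpar (fun k => s (S k)) (S n))).
  set (t := fun n => tpar (fun k => s (S k)) (S n)).
  rewrite bin_val_cons. pose proof (bin_val_bounds t).
  change (tpar s 1) with (xorb false (s 0%nat)).
  unfold tent. destruct (s 0%nat) eqn:Hs0; simpl b2R.
  - rewrite (bin_val_ext _ (fun n => negb (t n)))
      by (intro n; now rewrite tpar_succ_l, Hs0).
    rewrite bin_val_negb. destruct (Rlt_dec _ _); lra.
  - rewrite (bin_val_ext _ t) by (intro n; now rewrite tpar_succ_l, Hs0).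
    destruct (Rlt_dec _ _); lra.
Qed.

Lemma iter_tent_tau_of m s : Nat.iter m tent (tau_of s) = tau_of (fun k => s (m + k)%nat).
Proof.
  revert s; induction m as [|m IH]; intro s; [reflexivity|].
  now rewrite Nat.iter_succ_r, tent_tau_of, IH.
Qed.

Lemma tpar_shift s m k : tpar (fun n => s (m + n)%nat) k = xorb (tpar s (m + k)) (tpar s m).
Proof.
  induction k as [|k IH]; simpl.
  - now rewrite Nat.add_0_r, Bool.xorb_nilpotent.
  - rewrite IH, Nat.add_succ_r. simpl.
    now destruct (tpar s (m + k)), (tpar s m), (s (m + k)%nat).
Qed.

Lemma tau_of_shift_K n m :
  tau_of (fun k => K (S n) (m + k)%nat) = bin_val (fun i => tm_shift (S n) m (S i)).
Proof. apply bin_val_ext. intro i. now rewrite tpar_shift, !tpar_K. Qed.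

Lemma tau_j_succ n : tau_j (S n) = bin_val (fun i => tm_periodic (S n) (S i)).
Proof. apply bin_val_ext. intro i. apply tpar_K. Qed.

Theorem mainTheorem7 :
  (forall j : nat, (1 <= j)%nat -> inLambda (tau_j j)) /\
  (forall j : nat, (1 <= j)%nat -> tau_j j < tau_j (S j)).
Proof.
  split; intros [|n] Hn; try lia.
  - split; [apply bin_val_bounds|]. intro m.
    unfold tau_j at 1. rewrite iter_tent_tau_of, tau_of_shift_K, tau_j_succ.
    apply bin_val_tm_shift_le.
  - rewrite !tau_j_succ. apply bin_val_tm_periodic_lt.
Qed.
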